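(* Let $N'\ge2$ and let $\mu_1<0<\mu_2<\cdots<\mu_{N'}$ be real numbers. Let $\delta$ be a sufficiently small positive constant ($0<\delta\ll1$, in particular $\delta<\mu_2$) and let $0<a<1<b<c$ be constants. Define $$\bar x_1=\frac{b-1}{2b[-\mu_1+\delta]},\qquad \bar x_k(m)=\frac{\frac{c+m-1}{m}-a}{2a[\mu_k-\delta]}\quad(2\le k\le N',\ m\ge1),$$ and let $\pi_1$ satisfy $$0<\pi_1\le\frac{\frac{b-1}{2b[-\mu_1+\delta]}}{\frac{b-1}{2b[-\mu_1+\delta]}+\frac{c-a}{2a[\mu_{N'}-\delta]}}.$$ Let $g:\mathbb R^+\to\mathbb R^+$ be differentiable with $g'(\mu)\ge0$ for $\mu>0$, and let $g(\mu_1)$ be an arbitrary given real constant. For a nonempty set $S=\{k_1<\cdots<k_{m'}\}\subseteq\{2,\dots,N'\}$ define $$\Delta(S)=\frac{1-\pi_1}{\pi_1}\bar x_1-\sum_{l=1}^{m'}\bar x_{k_l}(m'),\qquad G(S)=\frac{\sum_{l=1}^{m'}\bar x_{k_l}(m')g(\mu_{k_l})+g(\mu_{k_1})\Delta(S)}{\sum_{l=1}^{m'}\bar x_{k_l}(m')+\Delta(S)},$$ and let $\mathcal K$ be the family of those $S$ with $\pi_1\le\frac{\bar x_1}{\bar x_1+\sum_{l=1}^{m'}\bar x_{k_l}(m')}$. Consider minimizing $$\Psi(x_1,x_{k_1},\dots,x_{k_{m'}})=\pi_1 g(\mu_1)+(1-\pi_1)\frac{\sum_{l=1}^{m'}x_{k_l}g(\mu_{k_l})}{\sum_{l=1}^{m'}x_{k_l}}$$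 over all $S=\{k_1<\cdots<k_{m'}\}\in\mathcal K$ and all positive reals $x_1,x_{k_1},\dots,x_{k_{m'}}$ satisfying $x_{k_l}\ge\bar x_{k_l}(m')$ for $l=1,\dots,m'$ and $\sum_{l=1}^{m'}x_{k_l}=\frac{1-\pi_1}{\pi_1}x_1\le\frac{1-\pi_1}{\pi_1}\bar x_1$. Let $S^*=\{k_1^*<\cdots<k_m^*\}\in\arg\min_{S\in\mathcal K}G(S)$. Then the minimal value is $$\Psi\big(\bar x_1,\ \bar x_{k_1^*}(m)+\Delta(S^* ),\ \bar x_{k_2^*}(m),\dots,\bar x_{k_m^*}(m)\big)=\pi_1 g(\mu_1)+(1-\pi_1)G(S^* ),$$ attained with the set $S^*$, and the corresponding portions of time $\pi_k=(1-\pi_1)x_k/\sum_{l}x_{k_l^*}$ are $$\pi_{k_1^*}=(1-\pi_1)\frac{\bar x_{k_1^*}(m)+\Delta(S^* )}{\sum_{l=1}^m\bar x_{k_l^*}(m)+\Delta(S^* )},\qquad \pi_{k_l^*}=(1-\pi_1)\frac{\bar x_{k_l^*}(m)}{\sum_{l'=1}^m\bar x_{k_{l'}^*}(m)+\Delta(S^* )}\ (l=2,\dots,m),$$ with $\pi_k=0$ for $k\in\{2,\dots,N'\}\setminus S^*$.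
   Context: Setting: graphs $G_1,\dots,G_{N'}$ on a common node set with adjacency matrices $A_l$, constant cure probability $\beta$ and infection probability $\gamma$; configuration $\mathcal C_l=(G_l,\beta,\gamma)$, $\mu_l=\beta-\gamma\lambda_1(A_l)$ where $\lambda_1(A)$ is the eigenvalue of largest modulus. $\mathcal C_1$ violates the epidemic threshold and the system must stay in it for portion of time $\pi_1$; $\mathcal C_2,\dots,\mathcal C_{N'}$ are moving-target-defense-induced configurations satisfying it, and $g(\mu_l)$ is the cost of inducing $\mathcal C_l$. The defender switches between $\mathcal C_1$ and $\mathcal C_k$, $k\in S$, by a continuous-time Markov chain with generator $Q$; $x_l=1/(-q_{ll})$ is the expected sojourn time in $\mathcal C_l$, and the portion of time in $\mathcal C_l$ is $x_l/\sum_p x_p$. The lower/upper bounds on the $x$'s are the sojourn-time conditions of a sufficient almost-sure convergence criterion, in which $\delta,a,b,c$ are constants such that there exist symmetric positive definite matrices $P_l$ with $aI<P_k<I$ for the satisfying configurations, $bI<P_1<cI$, and $\{P_l[\gamma A_l-\beta I]\}^s\le[\gamma\lambda_1(A_l)-\beta+\delta/2]P_l$. *)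

From mathcomp Require Import all_boot all_order all_algebra.
From mathcomp Require Import all_classical all_reals all_analysis.
Set Implicit Arguments. Unset Strict Implicit. Unset Printing Implicit Defensive.
Import Order.TTheory GRing.Theory Num.Theory.
Local Open Scope ring_scope.

(* Configurations are indexed by naturals 1..N'; mu : nat -> R, mu k = mu_k. *)

Definition xbar1 (R : realType) (mu1 delta b : R) : R :=
  (b - 1) / (2 * b * (- mu1 + delta)).

Definition xbark (R : realType) (mu : nat -> R) (delta a c : R) (m k : nat) : R :=
  ((c + m%:R - 1) / m%:R - a) / (2 * a * (mu k - delta)).

(* A nonempty subset S = {k_1 < ... < k_m'} of {2,...,N'}, represented by the
   strictly increasing list [:: k_1; ...; k_m'];  k_1 = head 0 S, m' = size S. *)
Definition admissible_set (N' : nat) (S : seq nat) : bool :=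
  [&& S != [::], sorted ltn S & all (fun k => (2 <= k <= N')%N) S].

Definition sum_xbar (R : realType) (mu : nat -> R) (delta a c : R) (S : seq nat) : R :=
  \sum_(k <- S) xbark mu delta a c (size S) k.

Definition Delta (R : realType) (mu : nat -> R) (delta a b c pi1 : R) (S : seq nat) : R :=
  (1 - pi1) / pi1 * xbar1 (mu 1%N) delta b - sum_xbar mu delta a c S.

Definition Gval (R : realType) (mu : nat -> R) (g : R -> R) (delta a b c pi1 : R)
    (S : seq nat) : R :=
  (\sum_(k <- S) xbark mu delta a c (size S) k * g (mu k)
     + g (mu (head 0%N S)) * Delta mu delta a b c pi1 S)
  / (sum_xbar mu delta a c S + Delta mu delta a b c pi1 S).

Definition inK (R : realType) (N' : nat) (mu : nat -> R) (delta a b c pi1 : R)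
    (S : seq nat) : Prop :=
  admissible_set N' S /\
  pi1 <= xbar1 (mu 1%N) delta b / (xbar1 (mu 1%N) delta b + sum_xbar mu delta a c S).

Definition Psi (R : realType) (mu : nat -> R) (g : R -> R) (pi1 : R)
    (S : seq nat) (x : nat -> R) : R :=
  pi1 * g (mu 1%N)
  + (1 - pi1) * ((\sum_(k <- S) x k * g (mu k)) / (\sum_(k <- S) x k)).

Definition feasible (R : realType) (mu : nat -> R) (delta a b c pi1 : R)
    (S : seq nat) (x1 : R) (x : nat -> R) : Prop :=
  [/\ 0 < x1,
      (forall k, k \in S -> 0 < x k /\ xbark mu delta a c (size S) k <= x k),
      \sum_(k <- S) x k = (1 - pi1) / pi1 * x1 &
      (1 - pi1) / pi1 * x1 <= (1 - pi1) / pi1 * xbar1 (mu 1%N) delta b].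

Definition xopt (R : realType) (mu : nat -> R) (delta a b c pi1 : R)
    (S : seq nat) (k : nat) : R :=
  if k == head 0%N S then
    xbark mu delta a c (size S) k + Delta mu delta a b c pi1 S
  else xbark mu delta a c (size S) k.

Definition portion (R : realType) (pi1 : R) (S : seq nat) (x : nat -> R) (k : nat) : R :=
  if k \in S then (1 - pi1) * x k / (\sum_(j <- S) x j) else 0.

From mathcomp Require Import all_boot all_order all_algebra.
From mathcomp Require Import all_classical all_reals all_analysis.
From mathcomp Require Import ring lra zify.
Import Order.TTheory GRing.Theory Num.Theory.
Set Implicit Arguments. Unset Strict Implicit.
Local Open Scope ring_scope.

(* Fix S in K and a feasible x, and write X = sum_k xbar_k(m),
   A = sum_k xbar_k(m) g (mu k) and T = sum_k x_k.  Since x_k >= xbar_k(m)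
   and g (mu k) is smallest at k = k_1, moving the whole excess T - X onto
   k_1 can only lower the weighted average of the g (mu k).  The resulting
   average g (mu k_1) + (A - g (mu k_1) X) / T is nonincreasing in T, and the
   constraint on x_1 gives T <= X + Delta(S); at T = X + Delta(S) it equals
   G(S), which is at least G(Sstar).  The candidate xopt attains all these
   bounds with equality. *)

Lemma derive1_ge0_ler (R : realType) (g : R -> R) :
  (forall x : R, 0 < x -> derivable g x 1) ->
  (forall x : R, 0 < x -> 0 <= derive1 g x) ->
  forall x y : R, 0 < x -> x <= y -> g x <= g y.
Proof.
move=> dg dg0 x y x0 xy.
have pos z : z \in `]x, y[ -> 0 < z.
  by rewrite in_itv /= => /andP[xz _]; exact: lt_trans xz.
apply: (@ger0_derive1_ndecr R g x y) => //.
- by move=> z /pos; exact: dg.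
- by move=> z /pos; exact: dg0.
- apply: derivable_within_continuous => z; rewrite in_itv /= => /andP[xz _].
  by apply: dg; exact: lt_le_trans xz.
Qed.

Lemma big_shift_at (R : comNzRingType) (s : seq nat) (h : nat) (F G : nat -> R) (D : R) :
  h \in s -> uniq s ->
  \sum_(k <- s) (if k == h then F k + D else F k) * G k =
    \sum_(k <- s) F k * G k + G h * D.
Proof.
move=> hs us; rewrite !(bigD1_seq h) //= eqxx mulrDl.
have -> : \sum_(k <- s | k != h) (if k == h then F k + D else F k) * G k =
          \sum_(k <- s | k != h) F k * G k by apply: eq_bigr => k /negPf ->.
by rewrite [D * _]mulrC addrAC.
Qed.

Lemma ler_sum_excess_at_min (R : realFieldType) (s : seq nat) (xb x w : nat -> R) (w0 : R) :
  (forall k, k \in s -> xb k <= x k) -> (forall k, k \in s -> w0 <= w k) ->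
  \sum_(k <- s) xb k * w k + w0 * (\sum_(k <- s) x k - \sum_(k <- s) xb k)
    <= \sum_(k <- s) x k * w k.
Proof.
move=> hx hw; rewrite -subr_ge0.
have -> : \sum_(k <- s) x k * w k
          - (\sum_(k <- s) xb k * w k + w0 * (\sum_(k <- s) x k - \sum_(k <- s) xb k))
          = \sum_(k <- s) (x k - xb k) * (w k - w0).
  rewrite mulrBr !mulr_sumr opprD addrA -!sumrB; apply: eq_bigr => k _; ring.
rewrite big_seq; apply: sumr_ge0 => k ks.
by apply: mulr_ge0; rewrite subr_ge0; [exact: hx | exact: hw].
Qed.

Lemma le_excess_ratio (R : realFieldType) (X D T A w0 : R) :
  0 < X -> 0 <= D -> 0 < T -> T <= X + D -> w0 * X <= A ->
  (A + w0 * D) / (X + D) <= (A + w0 * (T - X)) / T.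
Proof.
move=> X0 D0 T0 TX AX; have XD0 : 0 < X + D by lra.
rewrite ler_pdivlMr // mulrAC ler_pdivrMr //.
have : 0 <= (A - w0 * X) * (X + D - T) by apply: mulr_ge0; lra.
nra.
Qed.

Lemma xbark_gt0 (R : realType) (mu : nat -> R) (delta a c : R) m k :
  0 < a -> a < 1 -> 1 < c -> delta < mu k -> (0 < m)%N ->
  0 < xbark mu delta a c m k.
Proof.
move=> a0 a1 c1 dk m0; rewrite /xbark.
have m0' : 0 < m%:R :> R by rewrite ltr0n.
have : 1 < (c + m%:R - 1) / m%:R by rewrite ltr_pdivlMr // mul1r; lra.
by move=> ?; rewrite divr_gt0 ?subr_gt0 ?mulr_gt0 //; lra.
Qed.

Section AdmissibleSet.

Variables (N' : nat) (S : seq nat).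
Hypothesis hS : admissible_set N' S.

Lemma admissible_uniq : uniq S.
Proof. by case/and3P: hS => _ /(sorted_uniq ltn_trans ltnn). Qed.

Lemma admissible_head_mem : head 0%N S \in S.
Proof. by case/and3P: hS; case: S => // h t _ _ _; exact: mem_head. Qed.

Lemma admissible_range k : k \in S -> (2 <= k <= N')%N.
Proof. by case/and3P: hS => _ _ /allP; apply. Qed.

Lemma admissible_head_min k : k \in S -> (head 0%N S <= k)%N.
Proof.
case/and3P: hS; case: S => // h t _ /(order_path_min ltn_trans) /allP ht _.
by rewrite in_cons => /predU1P[-> // | /ht /ltnW].
Qed.

End AdmissibleSet.

Section OptimalSojournTimes.

Variables (R : realType) (N' : nat) (mu : nat -> R) (g : R -> R) (delta a b c pi1 : R).
Hypotheses (mu1_lt0 : mu 1%N < 0)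
  (mu_incr : forall k : nat, (2 <= k)%N -> (k < N')%N -> mu k < mu k.+1)
  (delta_gt0 : 0 < delta) (delta_lt_mu2 : delta < mu 2%N)
  (a_gt0 : 0 < a) (a_lt1 : a < 1) (b_gt1 : 1 < b) (b_lt_c : b < c) (pi1_gt0 : 0 < pi1)
  (g_derivable : forall x : R, 0 < x -> derivable g x 1)
  (g_derive1_ge0 : forall x : R, 0 < x -> 0 <= derive1 g x).

Lemma xbar1_gt0 : 0 < xbar1 (mu 1%N) delta b.
Proof.
rewrite /xbar1 divr_gt0 ?subr_gt0 //.
by rewrite !mulr_gt0 ?addr_gt0 ?oppr_gt0 // (lt_trans ltr01 b_gt1).
Qed.

Lemma mu_ler i j : (2 <= i)%N -> (i <= j <= N')%N -> mu i <= mu j.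
Proof.
move=> i2 /andP[ij jN].
apply: (homo_leq_in (D := [pred k | 2 <= k <= N']%N) (r := fun x y => x <= y)) => //=.
- exact: le_trans.
- by move=> p q; rewrite !inE => /andP[p2 _] /andP[_ qN] k /andP[pk kq]; rewrite inE; lia.
- by move=> k; rewrite !inE => /andP[k2 _] /andP[_ kN]; apply/ltW/mu_incr.
- by rewrite inE i2 (leq_trans ij jN).
- by rewrite inE jN (leq_trans i2 ij).
Qed.

Lemma delta_lt_mu k : (2 <= k <= N')%N -> delta < mu k.
Proof. by move=> hk; exact: lt_le_trans delta_lt_mu2 (mu_ler (leqnn 2) hk). Qed.

Variable S : seq nat.
Hypothesis hS : admissible_set N' S.

Lemma xbark_in_gt0 k : k \in S -> 0 < xbark mu delta a c (size S) k.
Proof.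
move=> kS; apply: xbark_gt0 => //; first exact: lt_trans b_lt_c.
- exact/delta_lt_mu/(admissible_range hS).
- by case: S kS.
Qed.

Lemma sum_xbar_gt0 : 0 < sum_xbar mu delta a c S.
Proof.
rewrite /sum_xbar (bigD1_seq _ (admissible_head_mem hS) (admissible_uniq hS)) /=.
apply: ltr_pwDl; first exact: xbark_in_gt0 (admissible_head_mem hS).
by rewrite big_seq_cond; apply: sumr_ge0 => k /andP[kS _]; exact/ltW/xbark_in_gt0.
Qed.

Lemma g_mu_head_ler k : k \in S -> g (mu (head 0%N S)) <= g (mu k).
Proof.
move=> kS; have hm := admissible_head_mem hS.
have /andP[h2 _] := admissible_range hS hm.
apply: (derive1_ge0_ler g_derivable g_derive1_ge0).
  exact/(lt_trans delta_gt0)/delta_lt_mu/(admissible_range hS).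
have /andP[_ kN] := admissible_range hS kS.
by apply: mu_ler; rewrite // (admissible_head_min hS).
Qed.

Lemma sum_xopt :
  \sum_(k <- S) xopt mu delta a b c pi1 S k
  = sum_xbar mu delta a c S + Delta mu delta a b c pi1 S.
Proof.
have := big_shift_at (xbark mu delta a c (size S)) (fun=> 1) (Delta mu delta a b c pi1 S)
  (admissible_head_mem hS) (admissible_uniq hS).
by rewrite mul1r; under eq_bigr do rewrite mulr1; under [in RHS]eq_bigr do rewrite mulr1.
Qed.

Lemma Psi_xopt :
  Psi mu g pi1 S (xopt mu delta a b c pi1 S)
  = pi1 * g (mu 1%N) + (1 - pi1) * Gval mu g delta a b c pi1 S.
Proof.
rewrite /Psi /Gval sum_xopt /xopt.
by rewrite (big_shift_at _ (fun k => g (mu k)) _ (admissible_head_mem hS) (admissible_uniq hS)).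
Qed.

Lemma portion_xopt k :
  portion pi1 S (xopt mu delta a b c pi1 S) k =
  if k == head 0%N S then
    (1 - pi1) * (xbark mu delta a c (size S) k + Delta mu delta a b c pi1 S)
      / (sum_xbar mu delta a c S + Delta mu delta a b c pi1 S)
  else if k \in S then
    (1 - pi1) * xbark mu delta a c (size S) k
      / (sum_xbar mu delta a c S + Delta mu delta a b c pi1 S)
  else 0.
Proof.
rewrite /portion sum_xopt /xopt.
by have [-> | _] := eqVneq k (head 0%N S); rewrite ?(admissible_head_mem hS).
Qed.

Hypothesis KS : inK N' mu delta a b c pi1 S.

Lemma inK_pi1_lt1 : pi1 < 1.
Proof.
have := KS.2; have := xbar1_gt0; have := sum_xbar_gt0.
set X := sum_xbar _ _ _ _ _; set x1 := xbar1 _ _ _ => X0 x10.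
by rewrite ler_pdivlMr; [nra | lra].
Qed.

Lemma Delta_ge0 : 0 <= Delta mu delta a b c pi1 S.
Proof.
have := KS.2; have := xbar1_gt0; have := sum_xbar_gt0; have := pi1_gt0.
rewrite /Delta; set X := sum_xbar _ _ _ _ _; set x1 := xbar1 _ _ _ => p0 X0 x10.
rewrite ler_pdivlMr; last lra.
by move=> hp; rewrite subr_ge0 mulrAC ler_pdivlMr //; nra.
Qed.

Lemma xopt_feasible :
  feasible mu delta a b c pi1 S (xbar1 (mu 1%N) delta b) (xopt mu delta a b c pi1 S).
Proof.
split; [exact: xbar1_gt0 | | | by []].
- move=> k kS; have xk := xbark_in_gt0 kS; have D0 := Delta_ge0.
  by rewrite /xopt; case: ifP => _; split; rewrite ?lerDl //; exact: ltr_wpDr.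
- by rewrite sum_xopt /Delta addrC subrK.
Qed.

Lemma Gval_le_average x1 x :
  feasible mu delta a b c pi1 S x1 x ->
  Gval mu g delta a b c pi1 S <= (\sum_(k <- S) x k * g (mu k)) / \sum_(k <- S) x k.
Proof.
case=> x10 hx hsum hle; have xb0 k (kS : k \in S) := ltW (xbark_in_gt0 kS).
have T0 : 0 < \sum_(k <- S) x k.
  by rewrite hsum !mulr_gt0 ?invr_gt0 ?subr_gt0 //; exact: inK_pi1_lt1.
have TX : \sum_(k <- S) x k <= sum_xbar mu delta a c S + Delta mu delta a b c pi1 S.
  by rewrite /Delta addrC subrK hsum.
have AX : g (mu (head 0%N S)) * sum_xbar mu delta a c S
          <= \sum_(k <- S) xbark mu delta a c (size S) k * g (mu k).
  rewrite /sum_xbar mulr_sumr big_seq [leRHS]big_seq; apply: ler_sum => k kS.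
  by rewrite mulrC ler_wpM2l ?xb0 ?g_mu_head_ler.
rewrite /Gval; apply: le_trans (le_excess_ratio sum_xbar_gt0 Delta_ge0 T0 TX AX) _.
apply: ler_wpM2r; first by rewrite invr_ge0 ltW.
by apply: ler_sum_excess_at_min => k kS; [exact: (hx k kS).2 | exact: g_mu_head_ler].
Qed.

End OptimalSojournTimes.

Theorem theorem6 (R : realType) (N' : nat) (mu : nat -> R) (g : R -> R)
    (delta a b c pi1 : R) (Sstar : seq nat) :
  (2 <= N')%N ->
  mu 1%N < 0 -> 0 < mu 2%N ->
  (forall k : nat, (2 <= k)%N -> (k < N')%N -> mu k < mu k.+1) ->
  0 < delta -> delta < mu 2%N ->
  0 < a -> a < 1 -> 1 < b -> b < c ->
  0 < pi1 ->
  pi1 <= xbar1 (mu 1%N) delta b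
         / (xbar1 (mu 1%N) delta b + (c - a) / (2 * a * (mu N' - delta))) ->
  (forall x : R, 0 < x -> 0 < g x) ->
  (forall x : R, 0 < x -> derivable g x 1) ->
  (forall x : R, 0 < x -> 0 <= derive1 g x) ->
  inK N' mu delta a b c pi1 Sstar ->
  (forall S, inK N' mu delta a b c pi1 S ->
     Gval mu g delta a b c pi1 Sstar <= Gval mu g delta a b c pi1 S) ->
  let V := pi1 * g (mu 1%N) + (1 - pi1) * Gval mu g delta a b c pi1 Sstar in
  let xs := xopt mu delta a b c pi1 Sstar in
  let m := size Sstar in
  let D := Delta mu delta a b c pi1 Sstar in
  [/\ feasible mu delta a b c pi1 Sstar (xbar1 (mu 1%N) delta b) xs,
      Psi mu g pi1 Sstar xs = V,
      (forall (S : seq nat) (x1 : R) (x : nat -> R),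
          inK N' mu delta a b c pi1 S -> feasible mu delta a b c pi1 S x1 x ->
          V <= Psi mu g pi1 S x) &
      (forall k : nat, (2 <= k <= N')%N ->
          portion pi1 Sstar xs k =
          (if k == head 0%N Sstar then
             (1 - pi1) * (xbark mu delta a c m k + D)
               / (sum_xbar mu delta a c Sstar + D)
           else if k \in Sstar then
             (1 - pi1) * xbark mu delta a c m k / (sum_xbar mu delta a c Sstar + D)
           else 0))].
Proof.
(* Unused: the bound on pi1 and N' >= 2 only make K nonempty, which is moot
   since Sstar is given in K; 0 < mu 2 follows from delta < mu 2. *)
move=> _ mu1 _ hmu d0 d2 a0 a1 b1 bc p0 _ _ dg dg0 KS Gmin V xs m D.
rewrite {}/V {}/xs {}/m {}/D.
have hS := KS.1.
have pi1_lt1 := inK_pi1_lt1 mu1 hmu d0 d2 a0 a1 b1 bc p0 hS KS.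
split.
- exact: (xopt_feasible mu1 hmu d0 d2 a0 a1 b1 bc p0 hS KS).
- exact: Psi_xopt hS.
- move=> S x1 x KS' hx; rewrite /Psi lerD2l.
  apply: ler_wpM2l; first by rewrite subr_ge0 ltW.
  apply: le_trans (Gmin S KS') _.
  exact: (Gval_le_average mu1 hmu d0 d2 a0 a1 b1 bc p0 dg dg0 KS'.1 KS' hx).
- by move=> k _; rewrite (portion_xopt _ _ _ _ _ _ hS).
Qed.
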